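(* Let $a\in[-1,1/3]$, $a\neq0$. For $\theta\in(2\pi/3,\pi)$ define \[ \zeta(\theta)=\frac{(2a-1)\cos\theta+\sqrt{(1-4a)\cos^2\theta+a}}{1-4a\cos^2\theta},\qquad z(\theta)=\frac{a\zeta(\theta)}{(2\cos\theta+\zeta(\theta))(1+2\zeta(\theta)\cos\theta)}, \] with $z$ extended by continuity at the removable singularity $\theta=\cos^{-1}(-1/(2\sqrt a))$ when $1/4<a\le1/3$. Then $z$ maps $(2\pi/3,\pi)$ onto the interior of \[ I_a=\left(-\infty,\ \frac{-2+9a-2\sqrt{(1-3a)^3}}{27}\right], \] i.e. onto $\left(-\infty,\frac{-2+9a-2\sqrt{(1-3a)^3}}{27}\right)$. *)

From Stdlib Require Import Reals Lra.
Open Scope R_scope.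

Definition zeta (a t : R) : R :=
  ((2*a - 1) * cos t + sqrt ((1 - 4*a) * (cos t)^2 + a)) / (1 - 4*a*(cos t)^2).

Definition zfun (a t : R) : R :=
  a * zeta a t / ((2 * cos t + zeta a t) * (1 + 2 * zeta a t * cos t)).

Definition zdefined (a t : R) : Prop :=
  1 - 4*a*(cos t)^2 <> 0 /\
  (2 * cos t + zeta a t) * (1 + 2 * zeta a t * cos t) <> 0.

Definition Ia_end (a : R) : R := (-2 + 9*a - 2 * sqrt ((1 - 3*a)^3)) / 27.

From Stdlib Require Import Reals Lra Psatz.
Open Scope R_scope.

(* Substituting s = 1 / (1 + 2 zeta cos t) turns z into the cubic
   P(s) = s^3 - s^2 + a s.  Written in terms of c = cos t, s has the denominator
   1 - 4 c^2, which does not vanish for c in (-1, -1/2); this gives the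
   continuous extension.  On that interval s is a root of
   (1 - s)^2 = 4 c^2 (s^2 - s + a) and sweeps out exactly (-oo, s0), where
   s0 = (1 - 2 r)/3 and r = sqrt (1 - 3 a).  Finally
   P(s) - Ia_end = (s - (1 + r)/3)^2 (s - s0), so P maps (-oo, s0) onto
   (-oo, Ia_end) by the intermediate value theorem. *)

Definition cubic (a s : R) : R := s^3 - s^2 + a*s.

Definition sval (a c : R) : R :=
  (1 - 2*c^2 - 2*c*sqrt ((1 - 4*a)*c^2 + a)) / (1 - 4*c^2).

Definition sbound (a : R) : R := (1 - 2*sqrt (1 - 3*a)) / 3.

Lemma zeta_quadratic a t :
  1 - 4*a*(cos t)^2 <> 0 -> 0 <= (1 - 4*a)*(cos t)^2 + a ->
  zeta a t ^ 2 + 2*cos t*zeta a t = a*(1 + 2*zeta a t*cos t)^2.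
Proof.
  intros he hD.
  assert (hw : sqrt ((1 - 4*a)*(cos t)^2 + a) * sqrt ((1 - 4*a)*(cos t)^2 + a)
               = (1 - 4*a)*(cos t)^2 + a) by (apply sqrt_sqrt; exact hD).
  assert (hz : zeta a t * (1 - 4*a*(cos t)^2)
               = (2*a - 1)*cos t + sqrt ((1 - 4*a)*(cos t)^2 + a))
    by (unfold zeta; field; exact he).
  set (w := sqrt _) in hw, hz. set (z := zeta a t) in *. set (c := cos t) in *.
  apply (Rmult_eq_reg_l (1 - 4*a*c^2)); [| exact he].
  transitivity (a*(1 - 4*a*c^2)*(1 + 2*z*c)^2 + (z*(1 - 4*a*c^2))^2
                - 2*(2*a - 1)*c*(z*(1 - 4*a*c^2)) - a*(1 - 4*a*c^2)); [ring |].
  rewrite hz. transitivity (a*(1 - 4*a*c^2)*(1 + 2*z*c)^2 + (w*w - ((1 - 4*a)*c^2 + a)));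
    [ring | rewrite hw; ring].
Qed.

Lemma sval_mul_zeta a t :
  1 - 4*(cos t)^2 <> 0 -> 1 - 4*a*(cos t)^2 <> 0 -> 0 <= (1 - 4*a)*(cos t)^2 + a ->
  sval a (cos t) * (1 + 2*zeta a t*cos t) = 1.
Proof.
  intros he1 he hD.
  assert (hw : sqrt ((1 - 4*a)*(cos t)^2 + a) * sqrt ((1 - 4*a)*(cos t)^2 + a)
               = (1 - 4*a)*(cos t)^2 + a) by (apply sqrt_sqrt; exact hD).
  assert (hz : zeta a t * (1 - 4*a*(cos t)^2)
               = (2*a - 1)*cos t + sqrt ((1 - 4*a)*(cos t)^2 + a))
    by (unfold zeta; field; exact he).
  assert (hS : sval a (cos t) * (1 - 4*(cos t)^2)
               = 1 - 2*(cos t)^2 - 2*cos t*sqrt ((1 - 4*a)*(cos t)^2 + a))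
    by (unfold sval; field; exact he1).
  set (w := sqrt _) in hw, hz, hS. set (z := zeta a t) in *.
  set (S := sval a (cos t)) in *. set (c := cos t) in *.
  apply (Rmult_eq_reg_r ((1 - 4*c^2)*(1 - 4*a*c^2))); [| now apply Rmult_integral_contrapositive].
  transitivity ((S*(1 - 4*c^2))*(1 - 4*a*c^2 + 2*c*(z*(1 - 4*a*c^2)))); [ring |].
  rewrite hS, hz. transitivity ((1 - 4*c^2)*(1 - 4*a*c^2) + 4*c^2*((1 - 4*a)*c^2 + a - w*w));
    [ring | rewrite hw; ring].
Qed.

Lemma cubic_inv a z c :
  1 + 2*z*c <> 0 -> 2*c + z <> 0 -> z^2 + 2*c*z = a*(1 + 2*z*c)^2 ->
  a*z / ((2*c + z)*(1 + 2*z*c)) = cubic a (/ (1 + 2*z*c)).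
Proof.
  intros hu hz hq.
  assert (ha : a = (z^2 + 2*c*z) / (1 + 2*z*c)^2) by (rewrite hq; field; exact hu).
  rewrite ha. unfold cubic. field. split; assumption.
Qed.

Lemma sval_quadratic a c :
  1 - 4*c^2 <> 0 -> 0 <= (1 - 4*a)*c^2 + a ->
  (1 - sval a c)^2 = 4*c^2*(sval a c ^ 2 - sval a c + a).
Proof.
  intros he hD.
  assert (hw : sqrt ((1 - 4*a)*c^2 + a) * sqrt ((1 - 4*a)*c^2 + a) = (1 - 4*a)*c^2 + a)
    by (apply sqrt_sqrt; exact hD).
  assert (hS : sval a c * (1 - 4*c^2) = 1 - 2*c^2 - 2*c*sqrt ((1 - 4*a)*c^2 + a))
    by (unfold sval; field; exact he).
  set (w := sqrt _) in hw, hS. set (S := sval a c) in *.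
  apply (Rmult_eq_reg_l (1 - 4*c^2)); [| exact he].
  transitivity ((1 - 4*c^2)*(4*c^2*(S^2 - S + a)) + (S*(1 - 4*c^2) - (1 - 2*c^2))^2
                - 4*c^2*((1 - 4*a)*c^2 + a)); [ring |].
  rewrite hS, <- hw. ring.
Qed.

Section Range.

Variable a : R.
Hypothesis ha_ge : -1 <= a.
Hypothesis ha_le : a <= 1/3.

Let r := sqrt (1 - 3*a).

Lemma r_sqr : r * r = 1 - 3*a.
Proof. apply sqrt_sqrt; lra. Qed.

Lemma r_bounds : 0 <= r <= 2.
Proof. pose proof (sqrt_pos (1 - 3*a)); pose proof r_sqr; unfold r in *; nra. Qed.

Lemma Ia_end_r : Ia_end a = (-2 + 9*a - 2*r^3) / 27.
Proof.
  unfold Ia_end. rewrite (sqrt_lem_1 _ (r^3)); [reflexivity | | |].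
  - apply pow_le; lra.
  - pose proof r_bounds; apply pow_le; lra.
  - rewrite <- r_sqr; ring.
Qed.

Lemma cubic_sub_Ia_end s :
  cubic a s - Ia_end a = (s - (1 + r)/3)^2 * (s - sbound a).
Proof.
  rewrite Ia_end_r; unfold cubic, sbound; fold r.
  replace a with ((1 - r*r)/3) at 1 2 by (rewrite r_sqr; field). field.
Qed.

Lemma cubic_lt_Ia_end s : s < sbound a -> cubic a s < Ia_end a.
Proof.
  intro hs. pose proof r_bounds. pose proof (cubic_sub_Ia_end s) as E.
  unfold sbound in hs, E; fold r in hs, E.
  assert (0 < (s - (1 + r)/3)^2) by nra. nra.
Qed.

Lemma cubic_sbound : cubic a (sbound a) = Ia_end a.
Proof. pose proof (cubic_sub_Ia_end (sbound a)). rewrite Rminus_diag, Rmult_0_r in H. lra. Qed.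

Lemma cubic_onto y : y < Ia_end a -> exists s, s < sbound a /\ cubic a s = y.
Proof.
  intro hy.
  set (s1 := Rmin (-1) y - 1).
  assert (s1 <= -2 /\ s1 < y) as [hs1 hs1y]
    by (unfold s1; pose proof (Rmin_l (-1) y); pose proof (Rmin_r (-1) y); lra).
  assert (hP1 : cubic a s1 - y < 0).
  { unfold cubic. assert (s1^2 - s1 + a >= 1) by nra. nra. }
  assert (hsb : s1 < sbound a) by (pose proof r_bounds; unfold sbound; fold r; lra).
  destruct (IVT (fun s => cubic a s - y) s1 (sbound a)) as [s [[_ hs] hPs]];
    [ intro x; unfold cubic; reg | exact hsb | exact hP1 | rewrite cubic_sbound; lra | ].
  exists s; split; [ | lra].
  destruct hs as [hs | ->]; [exact hs|]. rewrite cubic_sbound in hPs. lra.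
Qed.

Lemma lt_sbound_iff s : s < 1/3 -> s < sbound a <-> (1 - s)^2 < 4*(s^2 - s + a).
Proof.
  intro hs. pose proof r_bounds. pose proof r_sqr.
  assert (F : 4*(s^2 - s + a) - (1 - s)^2 = 3*(s - sbound a)*(s - (1 + 2*r)/3)).
  { unfold sbound; fold r. replace a with ((1 - r*r)/3) at 1 by lra. field. }
  assert (s - (1 + 2*r)/3 < 0) by lra.
  split; intro h; nra.
Qed.

Lemma sbound_le_third : sbound a <= 1/3.
Proof. pose proof r_bounds. unfold sbound; fold r. lra. Qed.

Lemma disc_pos c : -1 < c < -1/2 -> 0 < (1 - 4*a)*c^2 + a.
Proof.
  intros [c1 c2]. assert (4*c^2 - 1 > 0) by nra. assert (1 - c^2 > 0) by nra.
  destruct (Rle_lt_dec 0 a); nra.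
Qed.

Lemma sval_lt_third c : -1 < c < -1/2 -> sval a c < 1/3.
Proof.
  intro hc. pose proof (sqrt_pos ((1 - 4*a)*c^2 + a)).
  assert (he : 1 - 4*c^2 < 0) by nra.
  assert (hS : sval a c * (1 - 4*c^2) = 1 - 2*c^2 - 2*c*sqrt ((1 - 4*a)*c^2 + a))
    by (unfold sval; field; lra).
  assert (sval a c * (1 - 4*c^2) > (1 - 4*c^2)/3) by nra.
  nra.
Qed.

Lemma sval_lt_sbound c : -1 < c < -1/2 -> sval a c < sbound a.
Proof.
  intro hc. pose proof (sval_lt_third c hc).
  assert (hq := sval_quadratic a c ltac:(nra) (Rlt_le _ _ (disc_pos c hc))).
  apply lt_sbound_iff; [assumption |].
  set (S := sval a c) in *.
  assert (0 < (1 - S)^2) by nra.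
  assert (0 < S^2 - S + a) by nra.
  assert (0 < (1 - c^2)*(S^2 - S + a)) by (apply Rmult_lt_0_compat; nra).
  nra.
Qed.

Lemma sval_onto s : s < sbound a -> exists c, -1 < c < -1/2 /\ sval a c = s.
Proof.
  intro hs. pose proof sbound_le_third.
  assert (hq : (1 - s)^2 < 4*(s^2 - s + a)) by (apply lt_sbound_iff; lra).
  set (m := sqrt (s^2 - s + a)).
  assert (hm : 0 < m) by (apply sqrt_lt_R0; nra).
  assert (hmm : m * m = s^2 - s + a) by (apply sqrt_sqrt; nra).
  assert (m < 1 - s < 2*m) as [hlo hhi] by (split; nra).
  exists (-(1 - s)/(2*m)). split.
  { split; apply (Rmult_lt_reg_r (2*m)); try lra; field_simplify; lra. }
  assert (hw : sqrt ((1 - 4*a)*(-(1 - s)/(2*m))^2 + a) = (1 - s - 2*a)/(2*m)).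
  { apply sqrt_lem_1.
    - apply Rle_trans with (((1 - s - 2*a)/(2*m))^2); [apply pow2_ge_0 |].
      right. replace a with (m*m - s^2 + s) by lra. field. lra.
    - apply Rmult_le_pos; [lra |]. apply Rlt_le, Rinv_0_lt_compat. lra.
    - replace a with (m*m - s^2 + s) by lra. field. lra. }
  unfold sval. rewrite hw.
  replace a with (m*m - s^2 + s) by lra. field. split; nra.
Qed.

Lemma range_cubic_sval y :
  y < Ia_end a <-> exists c, -1 < c < -1/2 /\ cubic a (sval a c) = y.
Proof.
  split.
  - intro hy. destruct (cubic_onto y hy) as [s [hs <-]].
    destruct (sval_onto s hs) as [c [hc <-]]. exists c. split; [exact hc | reflexivity].
  - intros [c [hc <-]]. apply cubic_lt_Ia_end, sval_lt_sbound, hc.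
Qed.

Lemma zfun_eq_cubic_sval t :
  -1 < cos t < -1/2 -> zdefined a t -> zfun a t = cubic a (sval a (cos t)).
Proof.
  intros hc [he hden].
  pose proof (Rlt_le _ _ (disc_pos (cos t) hc)) as hD.
  assert (hu := sval_mul_zeta a t ltac:(nra) he hD).
  apply Rmult_neq_0_reg in hden as [hz hu0].
  replace (sval a (cos t)) with (/ (1 + 2*zeta a t*cos t))
    by (symmetry; apply (Rmult_eq_reg_r (1 + 2*zeta a t*cos t)); [rewrite Rinv_l|]; lra).
  apply cubic_inv; [exact hu0 | exact hz | exact (zeta_quadratic a t he hD)].
Qed.

Lemma continuity_cubic_sval_cos t :
  -1 < cos t < -1/2 -> continuity_pt (fun t => cubic a (sval a (cos t))) t.
Proof.
  intro hc. pose proof (disc_pos (cos t) hc). unfold cubic, sval. reg; nra.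
Qed.

End Range.

Lemma cos_2PI3 : cos (2*PI/3) = -1/2.
Proof.
  replace (2*PI/3) with (PI - PI/3) by field.
  rewrite Rtrigo_facts.cos_pi_minus, cos_PI3. lra.
Qed.

Lemma cos_bounds_2PI3_PI t : 2*PI/3 < t < PI -> -1 < cos t < -1/2.
Proof.
  intros [h1 h2]. pose proof PI_RGT_0. rewrite <- cos_2PI3, <- cos_PI.
  split; apply cos_decreasing_1; lra.
Qed.

Lemma cos_onto_2PI3_PI c : -1 < c < -1/2 -> exists t, 2*PI/3 < t < PI /\ cos t = c.
Proof.
  intro hc. exists (acos c).
  pose proof (acos_bound_lt c ltac:(lra)). pose proof PI_RGT_0.
  assert (hcos : cos (acos c) = c) by (apply cos_acos; lra).
  split; [split | exact hcos]; [| lra].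
  apply Rnot_le_lt. intro h.
  assert (cos (2*PI/3) <= cos (acos c))
    by (destruct h as [h | ->]; [left; apply cos_decreasing_1 | right]; lra).
  rewrite cos_2PI3 in *. lra.
Qed.

Theorem lemma2p9 (a : R) (ha1 : -1 <= a) (ha2 : a <= 1/3) (ha0 : a <> 0) :
  exists f : R -> R,
    (forall t, 2*PI/3 < t < PI -> continuity_pt f t) /\
    (forall t, 2*PI/3 < t < PI -> zdefined a t -> f t = zfun a t) /\
    (forall y, y < Ia_end a <-> exists t, 2*PI/3 < t < PI /\ f t = y).
Proof.
  exists (fun t => cubic a (sval a (cos t))). split; [| split].
  - intros t ht. apply (continuity_cubic_sval_cos a ha1 ha2), cos_bounds_2PI3_PI, ht.
  - intros t ht hz. symmetry.
    apply (zfun_eq_cubic_sval a ha1 ha2); [apply cos_bounds_2PI3_PI, ht | exact hz].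
  - intro y. rewrite (range_cubic_sval a ha1 ha2). split.
    + intros [c [hc <-]]. destruct (cos_onto_2PI3_PI c hc) as [t [ht <-]]. now exists t.
    + intros [t [ht <-]]. exists (cos t). split; [apply cos_bounds_2PI3_PI |]; easy.
Qed.
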